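(* Let $X,Y$ be Archimedean vector lattices and let $T:X\to Y$ be a linear operator satisfying condition $(\beta)$. Then for each $x\in X$ we have $T(|x|)\in\{Tx\}^{dd}$.
   Context: All vector lattices are Archimedean. For a subset $A$ of a vector lattice $X$, $A^d=\{x\in X: |x|\wedge|a|=0 \text{ for all } a\in A\}$ and $A^{dd}=(A^d)^d$. For $a,b\in X$ we write $a\lhd b$ if $\{a\}^{dd}\subseteq\{b\}^{dd}$. A linear operator $T:X\to Y$ satisfies condition $(\beta)$ if $Ta\lhd Tb$ in $Y$ whenever $a\lhd b$ in $X$. *)

From mathcomp Require Import all_boot all_order all_algebra.
From mathcomp Require Import reals.
Set Implicit Arguments. Unset Strict Implicit. Unset Printing Implicit Defensive.
Import Order.TTheory GRing.Theory Num.Theory.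
Local Open Scope ring_scope.

Record vlattice (R : realType) := VLattice {
  vl_car :> lmodType R;
  vl_le : vl_car -> vl_car -> Prop;
  vl_join : vl_car -> vl_car -> vl_car;
  vl_le_refl : forall x, vl_le x x;
  vl_le_anti : forall x y, vl_le x y -> vl_le y x -> x = y;
  vl_le_trans : forall x y z, vl_le x y -> vl_le y z -> vl_le x z;
  vl_le_add : forall x y z, vl_le x y -> vl_le (x + z) (y + z);
  vl_le_scale : forall (c : R) x y, 0 <= c -> vl_le x y -> vl_le (c *: x) (c *: y);
  vl_join_ubl : forall x y, vl_le x (vl_join x y);
  vl_join_ubr : forall x y, vl_le y (vl_join x y);
  vl_join_lub : forall x y z, vl_le x z -> vl_le y z -> vl_le (vl_join x y) z
}.

Section VL.
Variables (R : realType) (X : vlattice R).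

Definition vl_meet (x y : X) : X := - vl_join (- x) (- y).
Definition vl_abs (x : X) : X := vl_join x (- x).

Definition archimedean_vl : Prop :=
  forall x y : X, vl_le 0 x -> (forall n : nat, vl_le (x *+ n) y) -> x = 0.

Definition disj (A : X -> Prop) : X -> Prop :=
  fun x => forall a, A a -> vl_meet (vl_abs x) (vl_abs a) = 0.
Definition bidisj (A : X -> Prop) : X -> Prop := disj (disj A).

Definition vl_lhd (a b : X) : Prop :=
  forall z, bidisj (fun y => y = a) z -> bidisj (fun y => y = b) z.
End VL.

Definition cond_beta (R : realType) (X Y : vlattice R) (T : X -> Y) : Prop :=
  forall a b : X, vl_lhd a b -> vl_lhd (T a) (T b).

(* Every element lies in the band it generates, and [|x|] generates a band
   inside that of [x] because [||x|| = |x|].  Hence [|x| <| x], condition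
   (beta) gives [T |x| <| T x], and [T |x|] lies in [{T |x|}^dd], which is
   contained in [{T x}^dd]. *)
From mathcomp Require Import all_boot all_order all_algebra.
From mathcomp Require Import reals.
Import GRing.Theory.
Local Open Scope ring_scope.

Section VectorLattice.
Variables (R : realType) (X : vlattice R).

Lemma vl_joinC (a b : X) : vl_join a b = vl_join b a.
Proof.
by apply: vl_le_anti; apply: vl_join_lub; [exact: vl_join_ubr | exact: vl_join_ubl
  | exact: vl_join_ubr | exact: vl_join_ubl].
Qed.

Lemma vl_meetC (a b : X) : vl_meet a b = vl_meet b a.
Proof. by rewrite /vl_meet vl_joinC. Qed.

Lemma vl_le_opp {x y : X} : vl_le x y -> vl_le (- y) (- x).
Proof.
move=> /(vl_le_add (- x - y)).
by rewrite addrA subrr add0r addrCA subrr addr0.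
Qed.

Lemma vl_abs_id (x : X) : vl_abs (vl_abs x) = vl_abs x.
Proof.
have le_x_abs : vl_le x (vl_abs x) := vl_join_ubl x (- x).
have le_Nx_abs : vl_le (- x) (vl_abs x) := vl_join_ubr x (- x).
have le_Nabs_abs : vl_le (- vl_abs x) (vl_abs x).
  exact: vl_le_trans (vl_le_opp le_x_abs) le_Nx_abs.
apply: vl_le_anti; last exact: vl_join_ubl.
by apply: vl_join_lub; [exact: vl_le_refl | exact: le_Nabs_abs].
Qed.

Lemma bidisj_self (y : X) : bidisj (fun u => u = y) y.
Proof. by move=> a ha; rewrite vl_meetC; apply: ha. Qed.

Lemma vl_lhd_abs (x : X) : vl_lhd (vl_abs x) x.
Proof. by move=> z hz a ha; apply: hz => _ ->; rewrite vl_abs_id; apply: ha. Qed.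

End VectorLattice.

Theorem corollary2p3 (R : realType) (X Y : vlattice R)
  (hX : archimedean_vl X) (hY : archimedean_vl Y)
  (T : {linear X -> Y}) (hT : cond_beta T) :
  forall x : X, bidisj (fun y => y = T x) (T (vl_abs x)).
Proof.
move=> x.
have abs_lhd : vl_lhd (T (vl_abs x)) (T x) := hT _ _ (@vl_lhd_abs R X x).
exact/abs_lhd/(@bidisj_self R Y).
Qed.
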